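(* Let $Y_k=(y_{1k},\dots,y_{sk})'\in\mathbb{R}^s_{\ge 0}$, $k\in E$, for a finite nonempty set $E$, and let $\mathrm{DMU}_j$ have outputs $y_{1j},\dots,y_{sj}>0$. Fix $r$, let $Q>0$, $\omega\in[0,1]$, and let $$p_{rj}(s)=\begin{cases} Q\omega, & s\le 0,\\ Q\omega\left(1-\frac{s}{y_{rj}}\right), & 0\le s\le y_{rj},\\ 0, & s\ge y_{rj}.\end{cases}$$ Set $M_1=y_{rj}$ and $M_2=\max_{k\in E}\{y_{rk}\}$. Then for every $\lambda_{kj}\ge 0$ ($k\in E$) and $s_{rj}\in\mathbb{R}$ with $\sum_{k\in E}\lambda_{kj}y_{rk}=y_{rj}+s_{rj}$ and $\sum_{k\in E}\lambda_{kj}=1$, there exist binary $I^1_{rj},I^2_{rj},I^3_{rj}\in\{0,1\}$ with $I^1_{rj}+I^2_{rj}+I^3_{rj}=1$ satisfying $$y_{rj}I^3_{rj}-M_1I^1_{rj}\le s_{rj}\le y_{rj}I^2_{rj}+M_2I^3_{rj},$$ and for every such choice of binaries, $p_{rj}(s_{rj})=Q\omega I^1_{rj}+Q\omega\left(1-\frac{s_{rj}}{y_{rj}}\right)I^2_{rj}$. That is, these values of $M_1$ and $M_2$ suffice in the linear representation of the payment function.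
   Context: $E$ is the set of extreme efficient DMUs of the attainable set generated by the DMUs' output vectors; $s_{rj}$ is the deviation of a target (a convex combination of the $Y_k$, $k\in E$) from the actual value $y_{rj}$; $Q$ is the incentive amount available to $\mathrm{DMU}_j$ and $\omega$ the weight of indicator $r$. *)

From HB Require Import structures.
From mathcomp Require Import all_boot all_order all_algebra.
Set Implicit Arguments. Unset Strict Implicit. Unset Printing Implicit Defensive.
Import Order.TTheory GRing.Theory Num.Theory.
Local Open Scope ring_scope.

Definition payment (R : realFieldType) (Q w y s : R) : R :=
  if s <= 0 then Q * w
  else if s <= y then Q * w * (1 - s / y)
  else 0.

Definition b2r {R : realFieldType} (b : bool) : R := (b : nat)%:R.

From HB Require Import structures.
From mathcomp Require Import all_boot all_order all_algebra.
From mathcomp Require Import lra.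
Import Order.TTheory GRing.Theory Num.Theory.
Local Open Scope ring_scope.

(* The target sum_k lam_k y_rk is a convex combination of values in [0, M2],
   so the slack s = target - y_rj lies in [-M1, M2].  The binaries I1, I2, I3
   select the pieces [-M1, 0], [0, y_rj], [y_rj, M2] of that interval, which
   cover it, and on each piece the linear expression is the matching branch of
   the payment function; the branches agree at the shared endpoints, so every
   admissible choice of binaries yields the same value. *)

Section ConvexCombination.

Variables (R : numDomainType) (I : finType) (lam : I -> R).
Hypotheses (lam_ge0 : forall k, 0 <= lam k) (lam_sum1 : \sum_k lam k = 1).

Lemma convex_comb_le (x : I -> R) (b : R) :
  (forall k, x k <= b) -> \sum_k lam k * x k <= b.
Proof.
move=> x_le; rewrite -[b]mul1r -lam_sum1 mulr_suml.
by apply: ler_sum => k _; apply: ler_wpM2l.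
Qed.

Lemma convex_comb_ge (x : I -> R) (a : R) :
  (forall k, a <= x k) -> a <= \sum_k lam k * x k.
Proof.
move=> x_ge; rewrite -[a]mul1r -lam_sum1 mulr_suml.
by apply: ler_sum => k _; apply: ler_wpM2l.
Qed.

End ConvexCombination.

Section PaymentLinearization.

Variable R : realFieldType.
Implicit Types Q w y s : R.

Definition bigM_constraint y (M1 M2 : R) s (I1 I2 I3 : bool) : Prop :=
  y * b2r I3 - M1 * b2r I1 <= s /\ s <= y * b2r I2 + M2 * b2r I3.

Lemma payment_le0 Q w y s : s <= 0 -> payment Q w y s = Q * w.
Proof. by move=> s_le0; rewrite /payment s_le0. Qed.

Lemma payment_mid Q w y s :
  0 < y -> 0 <= s -> s <= y -> payment Q w y s = Q * w * (1 - s / y).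
Proof.
move=> y_gt0 s_ge0 s_le; rewrite /payment s_le; case: ifP => // s_le0.
have -> : s = 0 by lra.
by rewrite mul0r subr0 mulr1.
Qed.

Lemma payment_ge Q w y s : 0 < y -> y <= s -> payment Q w y s = 0.
Proof.
move=> y_gt0 y_le; rewrite /payment; case: ifP => [s_le0|_]; first lra.
case: ifP => // s_le; have -> : s = y by lra.
by rewrite divff ?gt_eqF // subrr mulr0.
Qed.

Lemma payment_bigM Q w y (M1 M2 : R) s (I1 I2 I3 : bool) :
  0 < y -> (I1 + I2 + I3 = 1)%N -> bigM_constraint y M1 M2 s I1 I2 I3 ->
  payment Q w y s = Q * w * b2r I1 + Q * w * (1 - s / y) * b2r I2.
Proof.
rewrite /bigM_constraint /b2r => y_gt0.
case: I1; case: I2; case: I3 => //= _ [lo hi]; rewrite ?mulr0 ?mulr1 in lo hi *.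
- by rewrite addr0 payment_le0 //; lra.
- by rewrite add0r payment_mid //; lra.
- by rewrite addr0 payment_ge //; lra.
Qed.

Lemma bigM_constraint_feasible y (M2 : R) s :
  - y <= s -> s <= M2 ->
  exists I1 I2 I3 : bool, (I1 + I2 + I3 = 1)%N /\ bigM_constraint y y M2 s I1 I2 I3.
Proof.
rewrite /bigM_constraint /b2r => lo hi.
have [s_le0 | s_gt0] := lerP s 0.
  by exists true, false, false; split=> //=; lra.
have [s_le | s_gt] := lerP s y.
  by exists false, true, false; split=> //=; lra.
by exists false, false, true; split=> //=; lra.
Qed.

End PaymentLinearization.

Theorem corollary1 (R : realFieldType) (s : nat) (E : finType)
  (Y : E -> 'I_s -> R) (yj : 'I_s -> R) (r : 'I_s) (Q w : R)
  (hE : (0 < #|E|)%N)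
  (hY : forall k i, 0 <= Y k i)
  (hyj : forall i, 0 < yj i)
  (hQ : 0 < Q) (hw0 : 0 <= w) (hw1 : w <= 1) :
  let M1 := yj r in
  let M2 := \big[Num.max/0]_(k : E) Y k r in
  forall (lam : E -> R) (srj : R),
    (forall k, 0 <= lam k) ->
    \sum_(k : E) lam k * Y k r = yj r + srj ->
    \sum_(k : E) lam k = 1 ->
    (exists I1 I2 I3 : bool,
        (nat_of_bool I1 + nat_of_bool I2 + nat_of_bool I3 = 1)%N /\
        yj r * b2r I3 - M1 * b2r I1 <= srj /\
        srj <= yj r * b2r I2 + M2 * b2r I3) /\
    (forall I1 I2 I3 : bool,
        (nat_of_bool I1 + nat_of_bool I2 + nat_of_bool I3 = 1)%N ->
        yj r * b2r I3 - M1 * b2r I1 <= srj ->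
        srj <= yj r * b2r I2 + M2 * b2r I3 ->
        payment Q w (yj r) srj
          = Q * w * b2r I1 + Q * w * (1 - srj / yj r) * b2r I2).
Proof.
move=> M1 M2 lam srj lam_ge0 target_eq lam_sum1.
have target_ge0 : 0 <= yj r + srj.
  by rewrite -target_eq; apply: convex_comb_ge => // k; apply: hY.
have target_le : yj r + srj <= M2.
  by rewrite -target_eq; apply: convex_comb_le => // k; apply: le_bigmax.
have yr_gt0 := hyj r.
split.
  by apply: bigM_constraint_feasible; lra.
move=> I1 I2 I3 one_hot lo hi.
exact: payment_bigM yr_gt0 one_hot (conj lo hi).
Qed.
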